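(* Let $D_1,D_2\in B(\ell^2)$ be the diagonal operators $D_1(x_1,x_2,\ldots)=(2^{-1}x_1,2^{-2}x_2,\ldots)$ and $D_2(x_1,x_2,\ldots)=(2^{-2}x_1,2^{-4}x_2,\ldots)$ (i.e. diagonals $2^{-n}$ and $2^{-2n}$). Then $I_{D_1}=I_{D_2}$, but $D_1$ and $D_2$ are not equivalent after extension. In particular, for compact operators, generating the same operator ideal does not imply equivalence after extension.
   Context: $\ell^2=\ell^2(\mathbb N)$ over $\mathbb C$; $B(X,Y)$ denotes bounded linear operators. $X\oplus Y$ is the $\ell^2$-direct sum, $\mathrm{id}_X$ the identity. Operators $T\in B(X)$ and $S\in B(Y)$ are equivalent after extension if there exist Banach spaces $X'$, $Y'$ and invertible (boundedly) operators $E\in B(Y\oplus Y',X\oplus X')$ and $F\in B(X\oplus X',Y\oplus Y')$ with $\begin{bmatrix}T&0\\0&\mathrm{id}_{X'}\end{bmatrix}=E\begin{bmatrix}S&0\\0&\mathrm{id}_{Y'}\end{bmatrix}F$. For $T\in B(X,Y)$ and Banach spaces $Z_1,Z_2$, $I_T(Z_1,Z_2)=\bigcup_{n\in\mathbb N}\{\sum_{j=1}^n R_jTR_j' : R_j\in B(Y,Z_2),\ R_j'\in B(Z_1,X)\}$ and $I_T=\bigcup_{Z_1,Z_2}I_T(Z_1,Z_2)$; $I_T=I_S$ means equality of these sets for all $Z_1,Z_2$. *)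

From Stdlib Require Import Reals Lra Psatz.
Open Scope R_scope.

Record C := mkC { Cre : R; Cim : R }.
Definition C0 : C := mkC 0 0.
Definition C1 : C := mkC 1 0.
Definition Cadd (a b : C) : C := mkC (Cre a + Cre b) (Cim a + Cim b).
Definition Copp (a : C) : C := mkC (- Cre a) (- Cim a).
Definition Cmul (a b : C) : C :=
  mkC (Cre a * Cre b - Cim a * Cim b) (Cre a * Cim b + Cim a * Cre b).
Definition Cn2 (a : C) : R := Cre a * Cre a + Cim a * Cim a.
Definition Cmod (a : C) : R := sqrt (Cn2 a).
Definition Crs (r : R) (a : C) : C := mkC (r * Cre a) (r * Cim a).

Record NSpace := mkNSpace {
  car :> Type;
  vzero : car;
  vadd : car -> car -> car;
  vopp : car -> car;
  vscal : C -> car -> car;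
  vnorm : car -> R }.
Arguments vzero {_}.
Arguments vadd {_}.
Arguments vopp {_}.
Arguments vscal {_}.
Arguments vnorm {_}.

Definition is_vector_space (X : NSpace) : Prop :=
  (forall x y z : X, vadd x (vadd y z) = vadd (vadd x y) z) /\
  (forall x y : X, vadd x y = vadd y x) /\
  (forall x : X, vadd x vzero = x) /\
  (forall x : X, vadd x (vopp x) = vzero) /\
  (forall (a b : C) (x : X), vscal a (vscal b x) = vscal (Cmul a b) x) /\
  (forall x : X, vscal C1 x = x) /\
  (forall (a : C) (x y : X), vscal a (vadd x y) = vadd (vscal a x) (vscal a y)) /\
  (forall (a b : C) (x : X), vscal (Cadd a b) x = vadd (vscal a x) (vscal b x)).

Definition is_norm (X : NSpace) : Prop :=
  (forall x : X, 0 <= vnorm x) /\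
  (forall x : X, vnorm x = 0 -> x = vzero) /\
  (forall (a : C) (x : X), vnorm (vscal a x) = Cmod a * vnorm x) /\
  (forall x y : X, vnorm (vadd x y) <= vnorm x + vnorm y).

Definition complete (X : NSpace) : Prop :=
  forall u : nat -> X,
    (forall eps, 0 < eps -> exists N, forall m n, (N <= m)%nat -> (N <= n)%nat ->
        vnorm (vadd (u m) (vopp (u n))) < eps) ->
    exists l : X, forall eps, 0 < eps -> exists N, forall n, (N <= n)%nat ->
        vnorm (vadd (u n) (vopp l)) < eps.

Definition Banach (X : NSpace) : Prop := is_vector_space X /\ is_norm X /\ complete X.

Definition linear {X Y : NSpace} (f : X -> Y) : Prop :=
  (forall x y, f (vadd x y) = vadd (f x) (f y)) /\
  (forall a x, f (vscal a x) = vscal a (f x)).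

Definition bounded {X Y : NSpace} (f : X -> Y) : Prop :=
  exists M, forall x, vnorm (f x) <= M * vnorm x.

Definition BL {X Y : NSpace} (f : X -> Y) : Prop := linear f /\ bounded f.

Definition BL_invertible {X Y : NSpace} (f : X -> Y) : Prop :=
  BL f /\ exists g : Y -> X, BL g /\ (forall x, g (f x) = x) /\ (forall y, f (g y) = y).

Definition dsum (X Y : NSpace) : NSpace :=
  mkNSpace (X * Y) (vzero, vzero)
    (fun p q => (vadd (fst p) (fst q), vadd (snd p) (snd q)))
    (fun p => (vopp (fst p), vopp (snd p)))
    (fun a p => (vscal a (fst p), vscal a (snd p)))
    (fun p => sqrt (vnorm (fst p) ^ 2 + vnorm (snd p) ^ 2)).

Definition ext_op {X X' : NSpace} (T : X -> X) : dsum X X' -> dsum X X' :=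
  fun p => (T (fst p), snd p).

Definition equiv_after_ext {X Y : NSpace} (T : X -> X) (S : Y -> Y) : Prop :=
  exists (X' Y' : NSpace), Banach X' /\ Banach Y' /\
  exists (E : dsum Y Y' -> dsum X X') (F : dsum X X' -> dsum Y Y'),
    BL_invertible E /\ BL_invertible F /\
    forall p, @ext_op X X' T p = E (@ext_op Y Y' S (F p)).

Fixpoint vsum {Z : NSpace} (n : nat) (f : nat -> Z) : Z :=
  match n with
  | O => vzero
  | S k => vadd (vsum k f) (f k)
  end.

Definition in_I {X Y : NSpace} (T : X -> Y) (Z1 Z2 : NSpace) (U : Z1 -> Z2) : Prop :=
  exists (n : nat) (R : nat -> Y -> Z2) (R' : nat -> Z1 -> X),
    (forall j, (j < n)%nat -> BL (R j) /\ BL (R' j)) /\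
    forall z, U z = vsum n (fun j => R j (T (R' j z))).

Definition same_ideal {X Y X2 Y2 : NSpace} (T : X -> Y) (S : X2 -> Y2) : Prop :=
  forall Z1 Z2 : NSpace, Banach Z1 -> Banach Z2 ->
    forall U : Z1 -> Z2, in_I T Z1 Z2 U <-> in_I S Z1 Z2 U.

Definition sq_summable (x : nat -> C) : Prop :=
  exists M, forall N, sum_f_R0 (fun n => Cn2 (x n)) N <= M.

Lemma Cn2_ge0 a : 0 <= Cn2 a.
Proof. unfold Cn2; nra. Qed.

Lemma sum_bound (a b e : nat -> R) (c d : R) N :
  (forall n, a n <= c * b n + d * e n) ->
  sum_f_R0 a N <= c * sum_f_R0 b N + d * sum_f_R0 e N.
Proof.
  intros H; induction N as [|N IH]; simpl.
  - apply H.
  - rewrite !Rmult_plus_distr_l. specialize (H (S N)). lra.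
Qed.

Lemma sq_add x y : sq_summable x -> sq_summable y ->
  sq_summable (fun n => Cadd (x n) (y n)).
Proof.
  intros [M HM] [K HK]; exists (2 * M + 2 * K); intros N.
  eapply Rle_trans.
  - apply (sum_bound (fun n => Cn2 (Cadd (x n) (y n))) (fun n => Cn2 (x n)) (fun n => Cn2 (y n)) 2 2).
    intros n; unfold Cn2, Cadd; simpl.
    pose proof (pow2_ge_0 (Cre (x n) - Cre (y n))); pose proof (pow2_ge_0 (Cim (x n) - Cim (y n))); nra.
  - specialize (HM N); specialize (HK N); lra.
Qed.

Lemma sq_scal a x : sq_summable x -> sq_summable (fun n => Cmul a (x n)).
Proof.
  intros [M HM]; exists (Cn2 a * M + 0 * M); intros N.
  eapply Rle_trans.
  - apply (sum_bound (fun n => Cn2 (Cmul a (x n))) (fun n => Cn2 (x n)) (fun n => Cn2 (x n)) (Cn2 a) 0).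
    intros n; unfold Cn2, Cmul; simpl; nra.
  - specialize (HM N); pose proof (Cn2_ge0 a); nra.
Qed.

Lemma sq_zero : sq_summable (fun _ => C0).
Proof.
  exists 0; intros N.
  eapply Rle_trans.
  - apply (sum_bound (fun _ => Cn2 C0) (fun _ => 0) (fun _ => 0) 0 0).
    intros n; unfold Cn2, C0; simpl; nra.
  - lra.
Qed.

Lemma sq_bound_nonempty x : sq_summable x ->
  bound (fun r => exists N, r = sum_f_R0 (fun n => Cn2 (x n)) N) /\
  exists r, (fun r => exists N, r = sum_f_R0 (fun n => Cn2 (x n)) N) r.
Proof.
  intros [M HM]; split.
  - exists M; intros r [N ->]; apply HM.
  - exists (sum_f_R0 (fun n => Cn2 (x n)) 0); exists 0%nat; reflexivity.
Qed.

Definition l2car := { x : nat -> C | sq_summable x }.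

(** ||x||_2 = sqrt (sup_N sum_{n<=N} |x_n|^2) *)
Definition l2norm (x : l2car) : R :=
  sqrt (proj1_sig (completeness _ (proj1 (sq_bound_nonempty _ (proj2_sig x)))
                                  (proj2 (sq_bound_nonempty _ (proj2_sig x))))).

Definition l2 : NSpace :=
  mkNSpace l2car
    (exist _ (fun _ => C0) sq_zero)
    (fun x y => exist _ _ (sq_add _ _ (proj2_sig x) (proj2_sig y)))
    (fun x => exist _ _ (sq_scal (Copp C1) _ (proj2_sig x)))
    (fun a x => exist _ _ (sq_scal a _ (proj2_sig x)))
    l2norm.

Lemma sq_diag (d : nat -> R) (Hd : forall n, 0 <= d n <= 1) x :
  sq_summable x -> sq_summable (fun n => Crs (d n) (x n)).
Proof.
  intros [M HM]; exists (1 * M + 0 * M); intros N.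
  eapply Rle_trans.
  - apply (sum_bound (fun n => Cn2 (Crs (d n) (x n))) (fun n => Cn2 (x n)) (fun n => Cn2 (x n)) 1 0).
    intros n; specialize (Hd n); pose proof (Cn2_ge0 (x n)).
    assert (Hdd : 0 <= 1 - d n * d n) by nra.
    pose proof (Rmult_le_pos _ _ Hdd H).
    unfold Cn2, Crs in *; simpl; nra.
  - specialize (HM N); lra.
Qed.

Definition diag (d : nat -> R) (Hd : forall n, 0 <= d n <= 1) : l2 -> l2 :=
  fun x => exist _ _ (sq_diag d Hd _ (proj2_sig x)).

Lemma half_pow_bounds k : 0 <= (/ 2) ^ k <= 1.
Proof.
  induction k as [|k IH]; simpl; lra.
Qed.

(** Indices are shifted: coordinate x_{n+1} of the paper is (x n) here. *)
Definition D1 : l2 -> l2 := diag (fun n => (/ 2) ^ (S n)) (fun n => half_pow_bounds (S n)).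
Definition D2 : l2 -> l2 :=
  diag (fun n => (/ 2) ^ (2 * S n)) (fun n => half_pow_bounds (2 * S n)).

From Pilot Require Import Defs.
From Stdlib Require Import Reals Lra Psatz Lia Classical FunctionalExtensionality ProofIrrelevance.
Import Defs.
Open Scope R_scope.

(* [I_D1 = I_D2]: [D2 = D1 D1], and [D1] is [D2] reindexed: on the odd coordinate [2q+1]
   it is [D2] read at [q], on the even coordinate [2q] twice that.  Hence each operator
   lies in the ideal generated by the other, and ideals are transitive.

   No equivalence after extension: from [D1 (+) 1 = E (D2 (+) 1) F] one gets, for every [x],
   [D1 x = a + D1 w] with [|a| <= A |D2 (f x)|] for a bounded linear [f] and [|w| <= K |D1 x|].
   Take [x] supported on the window [[n, n+k]] with [f x] vanishing on the first [k]
   coordinates ([k] equations in [k+1] unknowns).  Then [|D2 (f x)| <= 4^-(k+1) |f x|];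
   for [n] large the tail [D1 w] beyond [n] is negligible against [D1 x], so
   [|D1 x| <= 2 |a|]; and [|D1 x| >= 2^-(n+k+1) |x|].  Together [2^-n <= C 2^-(k+1)],
   which fails for [k] large. *)

Lemma C_ext a b : Cre a = Cre b -> Cim a = Cim b -> a = b.
Proof. destruct a, b; simpl; intros -> ->; reflexivity. Qed.

Definition Csub a b := Cadd a (Copp b).

Lemma C_ring : ring_theory C0 C1 Cadd Cmul Csub Copp (@eq C).
Proof. constructor; intros; apply C_ext; simpl; ring. Qed.
Add Ring C_ring : C_ring.

Lemma C1_neq0 : C1 <> C0.
Proof. intros H; injection H; lra. Qed.

Lemma Cn2_C0 : Cn2 C0 = 0.
Proof. unfold Cn2; simpl; ring. Qed.

Lemma Cn2_Cmul a b : Cn2 (Cmul a b) = Cn2 a * Cn2 b.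
Proof. unfold Cn2; simpl; ring. Qed.

Lemma Cn2_Crs d a : Cn2 (Crs d a) = d * d * Cn2 a.
Proof. unfold Cn2; simpl; ring. Qed.

Lemma Cn2_eq0 a : Cn2 a = 0 -> a = C0.
Proof. destruct a as [x y]; unfold Cn2; simpl; intros H; apply C_ext; simpl; nra. Qed.

Lemma Cn2_gt0 a : a <> C0 -> 0 < Cn2 a.
Proof.
  intros Ha; destruct (Cn2_ge0 a) as [H|H]; [exact H|].
  now contradiction (Ha (Cn2_eq0 a (eq_sym H))).
Qed.

Lemma Cmul_neq0 a b : a <> C0 -> b <> C0 -> Cmul a b <> C0.
Proof.
  intros Ha Hb Hab; apply (Rlt_irrefl 0).
  rewrite <- Cn2_C0 at 2; rewrite <- Hab, Cn2_Cmul.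
  apply Rmult_lt_0_compat; apply Cn2_gt0; assumption.
Qed.

Lemma Cn2_Cadd_le a b : Cn2 (Cadd a b) <= 2 * Cn2 a + 2 * Cn2 b.
Proof.
  unfold Cn2; simpl.
  pose proof (pow2_ge_0 (Cre a - Cre b)); pose proof (pow2_ge_0 (Cim a - Cim b)); nra.
Qed.

Fixpoint Csum (L : nat) (g : nat -> C) : C :=
  match L with O => C0 | S L' => Cadd (Csum L' g) (g L') end.

Lemma Csum_ext L f g : (forall j, (j < L)%nat -> f j = g j) -> Csum L f = Csum L g.
Proof. induction L; simpl; intros H; [reflexivity|]. rewrite IHL, H; auto. Qed.

Lemma Csum_C0 L : Csum L (fun _ => C0) = C0.
Proof. induction L; simpl; [reflexivity|]. rewrite IHL; ring. Qed.

Lemma Csum_scal L s f : Csum L (fun j => Cmul s (f j)) = Cmul s (Csum L f).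
Proof. induction L; simpl; [ring|]. rewrite IHL; ring. Qed.

Lemma Csum_sub L f g :
  Csum L (fun j => Cadd (f j) (Copp (g j))) = Cadd (Csum L f) (Copp (Csum L g)).
Proof. induction L; simpl; [ring|]. rewrite IHL; ring. Qed.

Lemma l2_ext (x y : l2) : (forall n, proj1_sig x n = proj1_sig y n) -> x = y.
Proof.
  destruct x as [x px], y as [y py]; simpl; intros H.
  assert (x = y) by (apply functional_extensionality; exact H); subst.
  f_equal; apply proof_irrelevance.
Qed.

Ltac l2_ring := apply l2_ext; intros ?; apply C_ext; simpl; ring.

Lemma l2_vector_space : is_vector_space l2.
Proof. repeat split; intros; l2_ring. Qed.

Definition psum2 (x : nat -> C) N := sum_f_R0 (fun n => Cn2 (x n)) N.

Lemma psum2_ge0 x N : 0 <= psum2 x N.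
Proof.
  unfold psum2; induction N; simpl; [apply Cn2_ge0|].
  pose proof (Cn2_ge0 (x (S N))); lra.
Qed.

Lemma psum2_mono x a b : (a <= b)%nat -> psum2 x a <= psum2 x b.
Proof.
  induction 1; [lra|]. unfold psum2 in *; simpl.
  pose proof (Cn2_ge0 (x (S m))); lra.
Qed.

Lemma l2norm_sq_lub (x : l2) :
  is_lub (fun r => exists N, r = psum2 (proj1_sig x) N) (l2norm x * l2norm x).
Proof.
  unfold l2norm; destruct (completeness _ _ _) as [s [Hub Hleast]]; simpl.
  assert (Hs : 0 <= s).
  { apply Rle_trans with (psum2 (proj1_sig x) 0); [apply psum2_ge0|].
    apply Hub; exists 0%nat; reflexivity. }
  rewrite sqrt_sqrt by exact Hs; split; assumption.
Qed.

Lemma l2norm_ge0 x : 0 <= l2norm x.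
Proof. apply sqrt_pos. Qed.

Lemma psum2_le_l2norm (x : l2) N : psum2 (proj1_sig x) N <= l2norm x * l2norm x.
Proof. apply (proj1 (l2norm_sq_lub x)); exists N; reflexivity. Qed.

Lemma l2norm_sq_le (y : l2) K :
  (forall N, psum2 (proj1_sig y) N <= K) -> l2norm y * l2norm y <= K.
Proof. intros H; apply (proj2 (l2norm_sq_lub y)); intros r [N ->]; apply H. Qed.

Lemma Cn2_le_l2norm (y : l2) p : Cn2 (proj1_sig y p) <= l2norm y * l2norm y.
Proof.
  eapply Rle_trans; [|apply (psum2_le_l2norm y p)]. unfold psum2.
  destruct p; simpl; [lra|]. pose proof (psum2_ge0 (proj1_sig y) p); unfold psum2 in *; lra.
Qed.

Lemma l2norm_le_of_psum2 (y x : l2) c : 0 <= c ->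
  (forall N, exists M, psum2 (proj1_sig y) N <= c * c * psum2 (proj1_sig x) M) ->
  l2norm y <= c * l2norm x.
Proof.
  intros Hc H. pose proof (l2norm_ge0 x); pose proof (l2norm_ge0 y).
  apply Rsqr_incr_0_var; [|apply Rmult_le_pos; assumption].
  replace (Rsqr (c * l2norm x)) with (c * c * (l2norm x * l2norm x)) by (unfold Rsqr; ring).
  apply l2norm_sq_le; intros N; destruct (H N) as [M HM].
  eapply Rle_trans; [exact HM|].
  apply Rmult_le_compat_l; [apply Rmult_le_pos; exact Hc|apply psum2_le_l2norm].
Qed.

Lemma l2norm_sq_le_coordwise (y a b : l2) c1 c2 : 0 <= c1 -> 0 <= c2 ->
  (forall p, Cn2 (proj1_sig y p) <= c1 * Cn2 (proj1_sig a p) + c2 * Cn2 (proj1_sig b p)) ->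
  l2norm y * l2norm y <= c1 * (l2norm a * l2norm a) + c2 * (l2norm b * l2norm b).
Proof.
  intros h1 h2 H; apply l2norm_sq_le; intros N.
  eapply Rle_trans;
    [apply (sum_bound _ (fun p => Cn2 (proj1_sig a p)) (fun p => Cn2 (proj1_sig b p))); apply H|].
  pose proof (psum2_le_l2norm a N); pose proof (psum2_le_l2norm b N); unfold psum2 in *; nra.
Qed.

Lemma l2norm_le_coordwise (y a : l2) c : 0 <= c ->
  (forall p, Cn2 (proj1_sig y p) <= c * c * Cn2 (proj1_sig a p)) ->
  l2norm y <= c * l2norm a.
Proof.
  intros Hc H; apply l2norm_le_of_psum2; [exact Hc|]; intros N; exists N.
  eapply Rle_trans.
  - apply (sum_bound _ (fun p => Cn2 (proj1_sig a p)) (fun _ => 0) (c * c) 0).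
    intros p; rewrite Rmult_0_l, Rplus_0_r; apply H.
  - unfold psum2; lra.
Qed.

Lemma l2norm_vzero : l2norm (@vzero l2) = 0.
Proof.
  apply Rle_antisym; [|apply l2norm_ge0].
  rewrite <- (Rmult_0_l (l2norm (@vzero l2))); apply l2norm_le_coordwise; [lra|].
  intros p; simpl; rewrite Cn2_C0; lra.
Qed.

Section VectorSpace.
Variable X : NSpace.
Hypothesis HX : is_vector_space X.

Lemma vadd_idem_eq0 (s : X) : vadd s s = s -> s = vzero.
Proof.
  destruct HX as [assoc [_ [idr [oppr _]]]]; intros H.
  assert (Hs : vadd (vadd s s) (vopp s) = vadd s (vopp s)) by (rewrite H; reflexivity).
  rewrite <- assoc, oppr, idr in Hs; exact Hs.
Qed.

Lemma vadd0l (v : X) : vadd vzero v = v.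
Proof. destruct HX as [_ [comm [idr _]]]; rewrite comm; apply idr. Qed.

Lemma vscal_v0 a : vscal a (@vzero X) = vzero.
Proof.
  apply vadd_idem_eq0; destruct HX as [_ [_ [idr [_ [_ [_ [distr _]]]]]]].
  rewrite <- distr, idr; reflexivity.
Qed.

Lemma vnorm_vzero : is_norm X -> vnorm (@vzero X) = 0.
Proof.
  intros [_ [_ [hom _]]]; rewrite <- (vscal_v0 C0), hom.
  unfold Cmod; rewrite Cn2_C0, sqrt_0; ring.
Qed.

Lemma vsum_app n m (h : nat -> X) :
  vsum (n + m) h = vadd (vsum n h) (vsum m (fun l => h (n + l)%nat)).
Proof.
  destruct HX as [assoc [_ [idr _]]].
  induction m; simpl.
  - rewrite Nat.add_0_r, idr; reflexivity.
  - rewrite Nat.add_succ_r; simpl; rewrite IHm, assoc; reflexivity.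
Qed.
End VectorSpace.

Lemma vsum_ext {X : NSpace} n (f g : nat -> X) :
  (forall j, (j < n)%nat -> f j = g j) -> vsum n f = vsum n g.
Proof. induction n; simpl; intros H; [reflexivity|]. rewrite IHn, H; auto. Qed.

Lemma linear_vzero {X Y : NSpace} (f : X -> Y) :
  is_vector_space X -> is_vector_space Y -> linear f -> f vzero = vzero.
Proof.
  intros HX HY [fadd _]; apply vadd_idem_eq0; [exact HY|].
  rewrite <- fadd, (proj1 (proj2 (proj2 HX))); reflexivity.
Qed.

Lemma linear_vsum {X Y : NSpace} (f : X -> Y) n g :
  is_vector_space X -> is_vector_space Y -> linear f ->
  f (vsum n g) = vsum n (fun j => f (g j)).
Proof.
  intros HX HY Hf; induction n; simpl; [apply linear_vzero; assumption|].
  rewrite (proj1 Hf), IHn; reflexivity.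
Qed.

Lemma bounded_nonneg {X Y : NSpace} (f : X -> Y) :
  (forall x : X, 0 <= vnorm x) -> bounded f ->
  exists M, 0 <= M /\ forall x, vnorm (f x) <= M * vnorm x.
Proof.
  intros H0 [M HM]; exists (Rmax M 0); split; [apply Rmax_r|]; intros x.
  eapply Rle_trans; [apply HM|]. apply Rmult_le_compat_r; [apply H0|apply Rmax_l].
Qed.

Lemma BL_comp {X Y Z : NSpace} (f : X -> Y) (g : Y -> Z) :
  (forall y : Y, 0 <= vnorm y) -> BL f -> BL g -> BL (fun x => g (f x)).
Proof.
  intros H0 [[fadd fscal] [M1 HM1]] [[gadd gscal] Hg].
  destruct (bounded_nonneg g H0 Hg) as [M2 [HM2 HB2]].
  split; [split; intros; [rewrite fadd, gadd|rewrite fscal, gscal]; reflexivity|].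
  exists (M2 * M1); intros x; eapply Rle_trans; [apply HB2|].
  rewrite Rmult_assoc; apply Rmult_le_compat_l; auto.
Qed.

Lemma BL_id {X : NSpace} : BL (fun x : X => x).
Proof. split; [split; reflexivity|exists 1; intros; lra]. Qed.

Lemma sqrt_sum_sq_ge a b : a <= sqrt (a ^ 2 + b ^ 2).
Proof.
  destruct (Rle_or_lt a 0); [pose proof (sqrt_pos (a ^ 2 + b ^ 2)); lra|].
  rewrite <- (sqrt_pow2 a) at 1 by lra.
  apply sqrt_le_1_alt; pose proof (pow2_ge_0 b); lra.
Qed.

Section DirectSum.
Context {X Y : NSpace}.

Lemma dsum_vnorm_ge0 (p : dsum X Y) : 0 <= vnorm p.
Proof. apply sqrt_pos. Qed.

Lemma vnorm_fst_le (p : dsum X Y) : vnorm (fst p) <= vnorm p.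
Proof. apply sqrt_sum_sq_ge. Qed.

Lemma vnorm_snd_le (p : dsum X Y) : vnorm (snd p) <= vnorm p.
Proof.
  change (vnorm (snd p) <= sqrt (vnorm (fst p) ^ 2 + vnorm (snd p) ^ 2)).
  rewrite Rplus_comm; apply sqrt_sum_sq_ge.
Qed.

Lemma vnorm_pair_l (a : X) (b : Y) :
  0 <= vnorm a -> vnorm b = 0 -> vnorm ((a, b) : dsum X Y) = vnorm a.
Proof.
  intros Ha Hb; change (sqrt (vnorm a ^ 2 + vnorm b ^ 2) = vnorm a).
  rewrite Hb, pow_i, Rplus_0_r by lia; apply sqrt_pow2; exact Ha.
Qed.

Lemma vnorm_pair_r (a : X) (b : Y) :
  vnorm a = 0 -> 0 <= vnorm b -> vnorm ((a, b) : dsum X Y) = vnorm b.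
Proof.
  intros Ha Hb; change (sqrt (vnorm a ^ 2 + vnorm b ^ 2) = vnorm b).
  rewrite Ha, pow_i, Rplus_0_l by lia; apply sqrt_pow2; exact Hb.
Qed.
End DirectSum.

(** * The ideal generated by an operator *)

Section Ideal.
Context {X Y : NSpace} (S : X -> Y).

Lemma in_I_vsum (Z1 Z2 : NSpace) n (U : nat -> Z1 -> Z2) : is_vector_space Z2 ->
  (forall j, (j < n)%nat -> in_I S Z1 Z2 (U j)) ->
  in_I S Z1 Z2 (fun z => vsum n (fun j => U j z)).
Proof.
  intros HZ2; induction n as [|n IH]; intros HU.
  - exists 0%nat, (fun _ _ => vzero), (fun _ _ => vzero); split; [lia|reflexivity].
  - destruct (IH (fun j Hj => HU j (Nat.lt_lt_succ_r _ _ Hj))) as [n1 [R1 [R1' [HB1 HU1]]]].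
    destruct (HU n (Nat.lt_succ_diag_r n)) as [n2 [R2 [R2' [HB2 HU2]]]].
    exists (n1 + n2)%nat,
      (fun l => if Nat.ltb l n1 then R1 l else R2 (l - n1)%nat),
      (fun l => if Nat.ltb l n1 then R1' l else R2' (l - n1)%nat); split.
    + intros j Hj; destruct (Nat.ltb_spec j n1); [apply HB1|apply HB2]; lia.
    + intros z; simpl; rewrite HU1, HU2, vsum_app by exact HZ2.
      f_equal; apply vsum_ext; intros j Hj.
      * destruct (Nat.ltb_spec j n1); [reflexivity|lia].
      * destruct (Nat.ltb_spec (n1 + j) n1); [lia|]; do 3 f_equal; lia.
Qed.

Lemma in_I_comp {W1 W2 Z1 Z2 : NSpace} (U : W1 -> W2) (R : W2 -> Z2) (R' : Z1 -> W1) :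
  is_vector_space W2 -> is_vector_space Z2 ->
  (forall w : W1, 0 <= vnorm w) -> (forall w : W2, 0 <= vnorm w) ->
  BL R -> BL R' -> in_I S W1 W2 U -> in_I S Z1 Z2 (fun z => R (U (R' z))).
Proof.
  intros HW2 HZ2 HW1n HW2n HR HR' [n [Rj [Rj' [HB HU]]]].
  exists n, (fun j y => R (Rj j y)), (fun j z => Rj' j (R' z)); split.
  - intros j Hj; destruct (HB j Hj); split; apply BL_comp; assumption.
  - intros z; rewrite HU; apply linear_vsum; [exact HW2|exact HZ2|apply HR].
Qed.

Lemma in_I_trans {X2 Y2 : NSpace} (T : X2 -> Y2) :
  is_vector_space Y2 -> (forall x : X2, 0 <= vnorm x) -> (forall y : Y2, 0 <= vnorm y) ->
  in_I S X2 Y2 T ->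
  forall (Z1 Z2 : NSpace) (U : Z1 -> Z2), is_vector_space Z2 -> in_I T Z1 Z2 U -> in_I S Z1 Z2 U.
Proof.
  intros HY2 HX2n HY2n HT Z1 Z2 U HZ2 [n [R [R' [HB HU]]]].
  replace U with (fun z => vsum n (fun j => R j (T (R' j z))))
    by (apply functional_extensionality; intros z; symmetry; apply HU).
  apply in_I_vsum; [exact HZ2|]; intros j Hj; destruct (HB j Hj).
  apply in_I_comp; assumption.
Qed.
End Ideal.

Lemma same_ideal_of_in_I {X Y : NSpace} (T S : X -> Y) :
  is_vector_space Y -> (forall x : X, 0 <= vnorm x) -> (forall y : Y, 0 <= vnorm y) ->
  in_I S X Y T -> in_I T X Y S -> same_ideal T S.
Proof.
  intros HY HXn HYn HT HS Z1 Z2 _ [HZ2 _] U; split; apply in_I_trans; assumption.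
Qed.

Lemma half_pow_pos m : 0 < (/ 2) ^ m.
Proof. apply pow_lt; lra. Qed.

Lemma half_pow_le a b : (a <= b)%nat -> (/ 2) ^ b <= (/ 2) ^ a.
Proof.
  induction 1; [lra|]; simpl.
  pose proof (half_pow_pos m); lra.
Qed.

Lemma half_pow_small eps : 0 < eps -> exists n, forall m, (n <= m)%nat -> (/ 2) ^ m < eps.
Proof.
  intros Heps; destruct (pow_lt_1_zero (/ 2) ltac:(rewrite Rabs_right; lra) eps Heps) as [n Hn].
  exists n; intros m Hm; specialize (Hn m Hm).
  rewrite Rabs_right in Hn; [exact Hn|left; apply half_pow_pos].
Qed.

Lemma diag_coord d Hd y p : proj1_sig (diag d Hd y) p = Crs (d p) (proj1_sig y p).
Proof. reflexivity. Qed.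

Lemma l2norm_diag_le d Hd (y : l2) c : 0 <= c ->
  (forall p, proj1_sig y p = C0 \/ d p <= c) -> l2norm (diag d Hd y) <= c * l2norm y.
Proof.
  intros Hc Hy; apply l2norm_le_coordwise; [exact Hc|]; intros p.
  rewrite diag_coord, Cn2_Crs; pose proof (Cn2_ge0 (proj1_sig y p)); pose proof (proj1 (Hd p)).
  destruct (Hy p) as [-> | Hdp]; [rewrite Cn2_C0; lra|].
  apply Rmult_le_compat_r; [assumption|apply Rmult_le_compat; assumption].
Qed.

Lemma l2norm_diag_ge d Hd (y : l2) c : 0 < c ->
  (forall p, proj1_sig y p = C0 \/ c <= d p) -> c * l2norm y <= l2norm (diag d Hd y).
Proof.
  intros Hc Hy.
  assert (H : l2norm y <= / c * l2norm (diag d Hd y)).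
  { apply l2norm_le_coordwise; [left; apply Rinv_0_lt_compat, Hc|]; intros p.
    rewrite diag_coord, Cn2_Crs; pose proof (Cn2_ge0 (proj1_sig y p)).
    destruct (Hy p) as [-> | Hdp]; [rewrite Cn2_C0; lra|].
    assert (1 <= / c * d p).
    { apply (Rmult_le_reg_l c); [exact Hc|]. rewrite <- Rmult_assoc, Rinv_r; lra. }
    replace (/ c * / c * (d p * d p * Cn2 (proj1_sig y p)))
      with ((/ c * d p) * (/ c * d p) * Cn2 (proj1_sig y p)) by ring.
    rewrite <- (Rmult_1_l (Cn2 _)) at 1; apply Rmult_le_compat_r; nra. }
  apply (Rmult_le_compat_l c) in H; [|lra].
  rewrite <- Rmult_assoc, Rinv_r, Rmult_1_l in H; lra.
Qed.

Lemma l2norm_sq_diag_tail d Hd (y a w : l2) s : 0 <= s ->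
  y = vadd a (diag d Hd w) -> (forall p, proj1_sig y p = C0 \/ d p <= s) ->
  l2norm y * l2norm y <= 2 * (l2norm a * l2norm a) + 2 * (s * s) * (l2norm w * l2norm w).
Proof.
  intros Hs Hyaw Hy; apply l2norm_sq_le_coordwise; [lra|nra|]; intros p.
  pose proof (Cn2_ge0 (proj1_sig a p)); pose proof (Cn2_ge0 (proj1_sig w p)).
  destruct (Hy p) as [-> | Hdp]; [rewrite Cn2_C0; nra|].
  rewrite Hyaw; simpl; eapply Rle_trans; [apply Cn2_Cadd_le|]; rewrite Cn2_Crs.
  pose proof (proj1 (Hd p)).
  assert (d p * d p <= s * s) by (apply Rmult_le_compat; assumption).
  nra.
Qed.

Lemma BL_diag d Hd : BL (diag d Hd).
Proof.
  split; [split; intros; l2_ring|].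
  exists 1; intros x; apply l2norm_diag_le; [lra|]; intros p; right; apply Hd.
Qed.

Lemma D2_eq_D1_D1 x : D2 x = D1 (D1 x).
Proof.
  apply l2_ext; intros n; unfold D1, D2; rewrite !diag_coord.
  replace (2 * S n)%nat with (S n + S n)%nat by lia; rewrite pow_add.
  apply C_ext; simpl; ring.
Qed.

(** * Splitting l^2 into odd and even coordinates *)

Definition odd_sub (x : nat -> C) q := x (S (2 * q)).
Definition even_sub (x : nat -> C) q := x (2 * q)%nat.
Definition odd_spread (y : nat -> C) p := if Nat.odd p then y (Nat.div2 p) else C0.
(* The factor 2 accounts for [(/2)^(2q+1) = 2 * (/2)^(2q+2)]: on even coordinates
   [D1] is twice the reindexed [D2]. *)
Definition even_spread2 (y : nat -> C) p := if Nat.even p then Crs 2 (y (Nat.div2 p)) else C0.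

Lemma odd_double q : Nat.odd (2 * q) = false.
Proof. rewrite <- Nat.negb_even, Nat.even_even; reflexivity. Qed.

Lemma odd_succ_double q : Nat.odd (S (2 * q)) = true.
Proof. rewrite Nat.odd_succ, Nat.even_even; reflexivity. Qed.

Lemma even_succ_double q : Nat.even (S (2 * q)) = false.
Proof. rewrite Nat.even_succ, odd_double; reflexivity. Qed.

Lemma psum2_odd_even_sub x N :
  psum2 (odd_sub x) N + psum2 (even_sub x) N = psum2 x (S (2 * N)).
Proof.
  induction N; [unfold psum2, odd_sub, even_sub; simpl; ring|].
  replace (S (2 * S N)) with (S (S (S (2 * N)))) by lia.
  unfold psum2 in *; rewrite !(tech5 _ N), (tech5 _ (S (S _))), (tech5 _ (S _)), <- IHN.
  unfold odd_sub, even_sub; replace (2 * S N)%nat with (S (S (2 * N))) by lia; ring.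
Qed.

Lemma psum2_odd_spread y M : psum2 (odd_spread y) (S (2 * M)) = psum2 y M.
Proof.
  induction M; [unfold psum2, odd_spread; simpl; rewrite Cn2_C0; ring|].
  replace (S (2 * S M)) with (S (S (S (2 * M)))) by lia.
  unfold psum2 in *; rewrite (tech5 _ (S (S _))), (tech5 _ (S _)), (tech5 _ M), IHM.
  unfold odd_spread; replace (S (S (2 * M))) with (2 * S M)%nat by lia.
  rewrite odd_double, odd_succ_double, Nat.div2_succ_double, Cn2_C0; ring.
Qed.

Lemma psum2_even_spread2 y M : psum2 (even_spread2 y) (S (2 * M)) = 4 * psum2 y M.
Proof.
  induction M; [unfold psum2, even_spread2; simpl; rewrite Cn2_C0, Cn2_Crs; ring|].
  replace (S (2 * S M)) with (S (S (S (2 * M)))) by lia.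
  unfold psum2 in *; rewrite (tech5 _ (S (S _))), (tech5 _ (S _)), (tech5 _ M), IHM.
  unfold even_spread2; replace (S (S (2 * M))) with (2 * S M)%nat by lia.
  rewrite Nat.even_even, even_succ_double, Nat.div2_double, Cn2_C0, Cn2_Crs; ring.
Qed.

Lemma psum2_odd_sub_le x N : psum2 (odd_sub x) N <= 1 * 1 * psum2 x (S (2 * N)).
Proof. rewrite <- psum2_odd_even_sub; pose proof (psum2_ge0 (even_sub x) N); lra. Qed.

Lemma psum2_even_sub_le x N : psum2 (even_sub x) N <= 1 * 1 * psum2 x (S (2 * N)).
Proof. rewrite <- psum2_odd_even_sub; pose proof (psum2_ge0 (odd_sub x) N); lra. Qed.

Lemma psum2_odd_spread_le y N : psum2 (odd_spread y) N <= 1 * 1 * psum2 y N.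
Proof. rewrite <- (psum2_odd_spread y N), !Rmult_1_l; apply psum2_mono; lia. Qed.

Lemma psum2_even_spread2_le y N : psum2 (even_spread2 y) N <= 2 * 2 * psum2 y N.
Proof.
  replace (2 * 2) with 4 by ring; rewrite <- (psum2_even_spread2 y N); apply psum2_mono; lia.
Qed.

Lemma sq_summable_of_psum2 (x y : nat -> C) c : 0 <= c ->
  (forall N, exists M, psum2 y N <= c * psum2 x M) -> sq_summable x -> sq_summable y.
Proof.
  intros Hc H [K HK]; exists (c * K); intros N; destruct (H N) as [M HM].
  eapply Rle_trans; [exact HM|]; apply Rmult_le_compat_l; [exact Hc|apply HK].
Qed.

Lemma sq_summable_odd_sub x : sq_summable x -> sq_summable (odd_sub x).
Proof.
  apply (sq_summable_of_psum2 _ _ (1 * 1)); [lra|intros N; eexists; apply psum2_odd_sub_le].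
Qed.

Lemma sq_summable_even_sub x : sq_summable x -> sq_summable (even_sub x).
Proof.
  apply (sq_summable_of_psum2 _ _ (1 * 1)); [lra|intros N; eexists; apply psum2_even_sub_le].
Qed.

Lemma sq_summable_odd_spread y : sq_summable y -> sq_summable (odd_spread y).
Proof.
  apply (sq_summable_of_psum2 _ _ (1 * 1)); [lra|intros N; eexists; apply psum2_odd_spread_le].
Qed.

Lemma sq_summable_even_spread2 y : sq_summable y -> sq_summable (even_spread2 y).
Proof.
  apply (sq_summable_of_psum2 _ _ (2 * 2)); [lra|intros N; eexists; apply psum2_even_spread2_le].
Qed.

Definition l2_odd_sub (x : l2) : l2 := exist _ _ (sq_summable_odd_sub _ (proj2_sig x)).
Definition l2_even_sub (x : l2) : l2 := exist _ _ (sq_summable_even_sub _ (proj2_sig x)).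
Definition l2_odd_spread (y : l2) : l2 := exist _ _ (sq_summable_odd_spread _ (proj2_sig y)).
Definition l2_even_spread2 (y : l2) : l2 := exist _ _ (sq_summable_even_spread2 _ (proj2_sig y)).

Lemma BL_l2_odd_sub : BL l2_odd_sub.
Proof.
  split; [split; intros; apply l2_ext; reflexivity|].
  exists 1; intros x; apply l2norm_le_of_psum2; [lra|intros N; eexists; apply psum2_odd_sub_le].
Qed.

Lemma BL_l2_even_sub : BL l2_even_sub.
Proof.
  split; [split; intros; apply l2_ext; reflexivity|].
  exists 1; intros x; apply l2norm_le_of_psum2; [lra|intros N; eexists; apply psum2_even_sub_le].
Qed.

Lemma BL_l2_odd_spread : BL l2_odd_spread.
Proof.
  split; [split; intros; apply l2_ext; intros p; simpl; unfold odd_spread;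
          destruct (Nat.odd p); try reflexivity; apply C_ext; simpl; ring|].
  exists 1; intros y; apply l2norm_le_of_psum2; [lra|intros N; eexists; apply psum2_odd_spread_le].
Qed.

Lemma BL_l2_even_spread2 : BL l2_even_spread2.
Proof.
  split; [split; intros; apply l2_ext; intros p; simpl; unfold even_spread2;
          destruct (Nat.even p); apply C_ext; simpl; ring|].
  exists 2; intros y; apply l2norm_le_of_psum2;
    [lra|intros N; eexists; apply psum2_even_spread2_le].
Qed.

Lemma D1_odd_even_split x :
  D1 x = vadd (l2_odd_spread (D2 (l2_odd_sub x))) (l2_even_spread2 (D2 (l2_even_sub x))).
Proof.
  apply l2_ext; intros p; unfold D1, D2; simpl.
  unfold odd_spread, even_spread2, odd_sub, even_sub.
  destruct (Nat.Even_or_Odd p) as [[q ->]|[q ->]].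
  - rewrite odd_double, Nat.even_even, Nat.div2_double.
    replace (2 * S q)%nat with (S (S (2 * q))) by lia.
    apply C_ext; simpl; rewrite Nat.add_succ_r; simpl pow; field.
  - replace (2 * q + 1)%nat with (S (2 * q)) by lia.
    rewrite odd_succ_double, even_succ_double, Nat.div2_succ_double.
    replace (2 * S q)%nat with (S (S (2 * q))) by lia.
    apply C_ext; simpl; rewrite Nat.add_succ_r; simpl pow; ring.
Qed.

Lemma D1_in_I_D2 : in_I D2 l2 l2 D1.
Proof.
  exists 2%nat,
    (fun j => if Nat.eqb j 0 then l2_odd_spread else l2_even_spread2),
    (fun j => if Nat.eqb j 0 then l2_odd_sub else l2_even_sub); split.
  - intros [|[|j]] Hj; simpl; [split; [apply BL_l2_odd_spread|apply BL_l2_odd_sub]|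
      split; [apply BL_l2_even_spread2|apply BL_l2_even_sub]|lia].
  - intros x; cbn [vsum Nat.eqb]; rewrite D1_odd_even_split, vadd0l;
      [reflexivity|apply l2_vector_space].
Qed.

Lemma D2_in_I_D1 : in_I D1 l2 l2 D2.
Proof.
  exists 1%nat, (fun _ => D1), (fun _ x => x); split.
  - intros j _; split; [apply BL_diag|apply BL_id].
  - intros x; cbn [vsum]; rewrite D2_eq_D1_D1, vadd0l; [reflexivity|apply l2_vector_space].
Qed.

Theorem same_ideal_D1_D2 : same_ideal D1 D2.
Proof.
  apply same_ideal_of_in_I;
    [apply l2_vector_space|exact l2norm_ge0|exact l2norm_ge0|exact D1_in_I_D2|exact D2_in_I_D1].
Qed.

(** * Equivalence after extension on l^2 *)

(* Read off [T (+) 1 = E (S (+) 1) F]: with [u := fst (F (x, 0))] and [v := snd (F (x, 0))],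
   [T x = a + T w] where [a] is the first component of [E (S u, 0)] and [w] that of
   [F^-1 (0, v)]. *)
Definition extension_decomposition (T S : l2 -> l2) : Prop :=
  exists (f : l2 -> l2) (A B K : R),
    linear f /\ 0 <= A /\ 0 <= B /\ 0 <= K /\
    (forall x, l2norm (f x) <= B * l2norm x) /\
    forall x, exists a w, T x = vadd a (T w) /\
      l2norm a <= A * l2norm (S (f x)) /\ l2norm w <= K * l2norm (T x).

Section Extension.
Variables (X' Y' : NSpace) (T S : l2 -> l2).
Variables (E : dsum l2 Y' -> dsum l2 X') (F : dsum l2 X' -> dsum l2 Y').
Hypotheses (HX' : is_vector_space X') (HY' : is_vector_space Y').
Hypotheses (NX' : is_norm X') (NY' : is_norm Y').
Hypotheses (HE : BL_invertible E) (HF : BL_invertible F).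
Hypothesis HS0 : S vzero = vzero.
Hypothesis HTS : forall p, ext_op T p = E (ext_op S (F p)).

Lemma vnorm_inl (x : l2) : vnorm ((x, vzero) : dsum l2 X') = l2norm x.
Proof.
  apply (@vnorm_pair_l l2 X'); [apply l2norm_ge0|apply vnorm_vzero; assumption].
Qed.

Lemma linear_fst_F_inl : linear (fun x => fst (F (x, vzero))).
Proof.
  destruct HF as [[[Fadd Fscal] _] _]; split.
  - intros x y.
    replace ((vadd x y, vzero) : dsum l2 X') with (vadd ((x, vzero) : dsum l2 X') (y, vzero))
      by (cbn; rewrite (proj1 (proj2 (proj2 HX'))); reflexivity).
    rewrite Fadd; reflexivity.
  - intros c x.
    replace ((vscal c x, vzero) : dsum l2 X') with (vscal c ((x, vzero) : dsum l2 X'))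
      by (cbn; rewrite vscal_v0; [reflexivity|exact HX']).
    rewrite Fscal; reflexivity.
Qed.

Lemma fst_F_inl_bounded :
  exists B, 0 <= B /\ forall x, l2norm (fst (F (x, vzero))) <= B * l2norm x.
Proof.
  destruct HF as [[_ FB] _]; destruct (bounded_nonneg F dsum_vnorm_ge0 FB) as [B [HB HFB]].
  exists B; split; [exact HB|]; intros x.
  eapply Rle_trans; [apply (vnorm_fst_le (F (x, vzero)))|].
  rewrite <- vnorm_inl; apply HFB.
Qed.

Lemma extension_decomposition_of_factorization : extension_decomposition T S.
Proof.
  destruct HE as [[[Eadd _] EB] [Einv [[_ EinvB] [EinvE EEinv]]]].
  destruct HF as [_ [Finv [[_ FinvB] [_ FFinv]]]].
  destruct (bounded_nonneg E dsum_vnorm_ge0 EB) as [ME [HME HEB]].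
  destruct (bounded_nonneg Einv dsum_vnorm_ge0 EinvB) as [MEi [HMEi HEiB]].
  destruct (bounded_nonneg Finv dsum_vnorm_ge0 FinvB) as [MFi [HMFi HFiB]].
  destruct fst_F_inl_bounded as [B [HB HFB]].
  exists (fun x => fst (F (x, vzero))), ME, B, (MFi * MEi).
  split; [exact linear_fst_F_inl|]; split; [exact HME|]; split; [exact HB|].
  split; [apply Rmult_le_pos; assumption|]; split; [exact HFB|]; intros x.
  set (u := fst (F (x, vzero))); set (v := snd (F (x, vzero))).
  assert (HTx : ((T x, vzero) : dsum l2 X') = E (S u, v)) by exact (HTS (x, vzero)).
  assert (Hsplit : ((S u, v) : dsum l2 Y') = vadd ((S u, vzero) : dsum l2 Y') (vzero, v)).
  { cbn; f_equal; [l2_ring|symmetry; apply vadd0l; exact HY']. }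
  assert (Hw : E (vzero, v) = ext_op T (Finv (vzero, v))).
  { rewrite HTS, FFinv; unfold ext_op; cbn [fst snd]; rewrite HS0; reflexivity. }
  exists (fst (E (S u, vzero))), (fst (Finv (vzero, v))); split; [|split].
  - change (T x) with (fst ((T x, vzero) : dsum l2 X')); rewrite HTx, Hsplit, Eadd, Hw; reflexivity.
  - eapply Rle_trans; [apply (vnorm_fst_le (E (S u, vzero)))|].
    eapply Rle_trans; [apply HEB|]; rewrite vnorm_pair_l;
      [apply Rle_refl|apply l2norm_ge0|apply vnorm_vzero; assumption].
  - assert (Hv : vnorm v <= MEi * l2norm (T x)).
    { eapply Rle_trans; [apply (vnorm_snd_le ((S u, v) : dsum l2 Y'))|].
      rewrite <- (EinvE (S u, v)), <- HTx, <- vnorm_inl; apply HEiB. }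
    eapply Rle_trans; [apply (vnorm_fst_le (Finv (vzero, v)))|].
    eapply Rle_trans; [apply HFiB|].
    rewrite vnorm_pair_r; [|exact l2norm_vzero|apply (proj1 NY')].
    rewrite Rmult_assoc; apply Rmult_le_compat_l; assumption.
Qed.
End Extension.

Lemma extension_decomposition_of_equiv (T S : l2 -> l2) :
  S vzero = vzero -> equiv_after_ext T S -> extension_decomposition T S.
Proof.
  intros HS0 [X' [Y' [[HX' [NX' _]] [[HY' [NY' _]] [E [F [HE [HF HTS]]]]]]]].
  exact (extension_decomposition_of_factorization X' Y' T S E F HX' HY' NX' NY' HE HF HS0 HTS).
Qed.

(** * Finite-dimensional linear algebra inside l^2 *)

Lemma homogeneous_system_nontrivial N k (a : nat -> nat -> C) : (k <= N)%nat ->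
  exists c : nat -> C, (exists j, (j <= N)%nat /\ c j <> C0) /\
    forall i, (i < k)%nat -> Csum (S N) (fun j => Cmul (a i j) (c j)) = C0.
Proof.
  revert k a; induction N as [|N IH]; intros k a Hk.
  - exists (fun _ => C1); split; [exists 0%nat; split; [lia|exact C1_neq0]|intros; lia].
  - destruct (classic (exists i0, (i0 < k)%nat /\ a i0 (S N) <> C0)) as [[i0 [Hi0 Hpiv]]|Hzero].
    + (* Gaussian elimination of the last unknown using the pivot row [i0]. *)
      set (b := fun i j => Cadd (Cmul (a i0 (S N)) (a i j)) (Copp (Cmul (a i (S N)) (a i0 j)))).
      destruct (IH (k - 1)%nat (fun i => b (if Nat.eqb i i0 then (k - 1)%nat else i)) ltac:(lia))
        as [c [[j0 [Hj0 Hcj0]] Hc]].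
      assert (Hb : forall i, (i < k)%nat -> Csum (S N) (fun j => Cmul (b i j) (c j)) = C0).
      { intros i Hi; destruct (Nat.eq_dec i i0) as [->|Hne].
        - unfold b; rewrite (Csum_ext _ _ (fun _ => C0)), Csum_C0 by (intros; ring); reflexivity.
        - destruct (Nat.eq_dec i (k - 1)) as [->|Hne'].
          + specialize (Hc i0 ltac:(lia)); rewrite Nat.eqb_refl in Hc; exact Hc.
          + specialize (Hc i ltac:(lia)); apply Nat.eqb_neq in Hne; rewrite Hne in Hc; exact Hc. }
      exists (fun j => if Nat.eqb j (S N) then Copp (Csum (S N) (fun l => Cmul (a i0 l) (c l)))
               else Cmul (a i0 (S N)) (c j)); split.
      * exists j0; split; [lia|]; destruct (Nat.eqb_spec j0 (S N)); [lia|].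
        apply Cmul_neq0; assumption.
      * intros i Hi; change (Csum (S (S N)) ?g) with (Cadd (Csum (S N) g) (g (S N))).
        cbv beta; rewrite Nat.eqb_refl, <- (Hb i Hi).
        rewrite (Csum_ext _ _ (fun j => Cmul (a i0 (S N)) (Cmul (a i j) (c j)))).
        2: { intros j Hj; destruct (Nat.eqb_spec j (S N)); [lia|ring]. }
        unfold b; rewrite Csum_scal.
        rewrite (Csum_ext _ (fun j => Cmul (Cadd _ _) (c j))
                   (fun j => Cadd (Cmul (a i0 (S N)) (Cmul (a i j) (c j)))
                                  (Copp (Cmul (a i (S N)) (Cmul (a i0 j) (c j))))))
          by (intros; ring).
        rewrite Csum_sub, !Csum_scal; ring.
    + exists (fun j => if Nat.eqb j (S N) then C1 else C0); split.
      * exists (S N); rewrite Nat.eqb_refl; split; [lia|exact C1_neq0].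
      * intros i Hi; change (Csum (S (S N)) ?g) with (Cadd (Csum (S N) g) (g (S N))).
        cbv beta; rewrite Nat.eqb_refl.
        rewrite (Csum_ext _ _ (fun _ => C0)), Csum_C0.
        2: { intros j Hj; destruct (Nat.eqb_spec j (S N)); [lia|ring]. }
        assert (Hai : a i (S N) = C0) by (apply NNPP; intros H; apply Hzero; eauto).
        rewrite Hai; ring.
Qed.

Lemma sq_summable_finite_support x M : (forall q, (M < q)%nat -> x q = C0) -> sq_summable x.
Proof.
  intros H; exists (psum2 x M); intros N; change (psum2 x N <= psum2 x M).
  induction N as [|N IH]; [apply psum2_mono; lia|].
  destruct (Nat.le_gt_cases (S N) M); [apply psum2_mono; assumption|].
  unfold psum2 in *; rewrite tech5, H, Cn2_C0 by lia; lra.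
Qed.

Lemma sq_summable_unit_vec p : sq_summable (fun q => if Nat.eqb q p then C1 else C0).
Proof.
  apply (sq_summable_finite_support _ p); intros q Hq.
  destruct (Nat.eqb_spec q p); [lia|reflexivity].
Qed.

Definition unit_vec (p : nat) : l2 := exist _ _ (sq_summable_unit_vec p).

Lemma coord_vsum L (f : nat -> l2) p :
  proj1_sig (vsum L f) p = Csum L (fun j => proj1_sig (f j) p).
Proof. induction L; simpl; [reflexivity|]; rewrite IHL; reflexivity. Qed.

Lemma coord_window_sum n L (c : nat -> C) p :
  proj1_sig (vsum L (fun j => vscal (c j) (unit_vec (n + j)))) p =
  if (Nat.leb n p && Nat.ltb p (n + L))%bool then c (p - n)%nat else C0.
Proof.
  rewrite coord_vsum; induction L as [|L IH]; cbn [Csum].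
  - destruct (Nat.leb_spec n p), (Nat.ltb_spec p (n + 0)); simpl; [lia|reflexivity..].
  - rewrite IH; simpl.
    destruct (Nat.eqb_spec p (n + L)), (Nat.leb_spec n p), (Nat.ltb_spec p (n + L)),
      (Nat.ltb_spec p (n + S L)); simpl; try lia;
      try replace (p - n)%nat with L by lia; apply C_ext; simpl; ring.
Qed.

Lemma exists_window_vector (f : l2 -> l2) n k : linear f ->
  exists x : l2, (forall p, (p < n \/ n + k < p)%nat -> proj1_sig x p = C0) /\
    (exists p, proj1_sig x p <> C0) /\
    forall i, (i < k)%nat -> proj1_sig (f x) i = C0.
Proof.
  intros Hf.
  destruct (homogeneous_system_nontrivial k k (fun i j => proj1_sig (f (unit_vec (n + j))) i)
              (Nat.le_refl k)) as [c [[j0 [Hj0 Hcj0]] Hc]].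
  exists (vsum (S k) (fun j => vscal (c j) (unit_vec (n + j)))); split; [|split].
  - intros p Hp; rewrite coord_window_sum.
    destruct (Nat.leb_spec n p), (Nat.ltb_spec p (n + S k)); simpl; [lia|reflexivity..].
  - exists (n + j0)%nat; rewrite coord_window_sum.
    destruct (Nat.leb_spec n (n + j0)), (Nat.ltb_spec (n + j0) (n + S k)); simpl; try lia.
    replace (n + j0 - n)%nat with j0 by lia; exact Hcj0.
  - intros i Hi; rewrite linear_vsum by (apply l2_vector_space || exact Hf).
    rewrite coord_vsum, <- (Hc i Hi); apply Csum_ext; intros j _.
    rewrite (proj2 Hf); apply C_ext; simpl; ring.
Qed.

Lemma l2norm_pos (y : l2) p : proj1_sig y p <> C0 -> 0 < l2norm y.
Proof.
  intros Hp; pose proof (Cn2_gt0 _ Hp); pose proof (Cn2_le_l2norm y p).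
  pose proof (l2norm_ge0 y); nra.
Qed.

Lemma decomposition_estimate (d a w u x A B K s h t : R) :
  0 <= a -> 0 <= w -> 0 <= u -> 0 <= x -> 0 <= A -> 0 <= B -> 0 < t -> 0 < d ->
  d * d <= 2 * (a * a) + 2 * (s * s) * (w * w) -> w <= K * d ->
  2 * (s * s) * (K * K) <= / 2 ->
  a <= A * (t * t * u) -> u <= B * x -> h * t * x <= d ->
  h <= 2 * A * B * t.
Proof.
  intros Ha Hw Hu Hx HA HB Ht Hd Htail HwK Hs Hau Hux Hlow.
  assert (Hw2 : w * w <= (K * d) * (K * d)) by (apply Rmult_le_compat; lra).
  assert (Hs2 : 2 * (s * s) * (w * w) <= / 2 * (d * d)).
  { assert (0 <= 2 * (s * s)) by nra.
    apply Rle_trans with (2 * (s * s) * ((K * d) * (K * d)));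
      [apply Rmult_le_compat_l; assumption|].
    replace (2 * (s * s) * (K * d * (K * d))) with (2 * (s * s) * (K * K) * (d * d)) by ring.
    apply Rmult_le_compat_r; [nra|exact Hs]. }
  assert (Hda : d <= 2 * a) by nra.
  assert (Hux' : A * (t * t * u) <= A * (t * t * (B * x))).
  { apply Rmult_le_compat_l; [exact HA|apply Rmult_le_compat_l; [nra|exact Hux]]. }
  assert (HdAB : d <= 2 * A * B * t * (t * x)) by nra.
  assert (Htx : 0 < t * x).
  { destruct Hx as [Hx|<-]; [apply Rmult_lt_0_compat; assumption|].
    rewrite !Rmult_0_r in HdAB; lra. }
  apply (Rmult_le_reg_r (t * x)); [exact Htx|]; nra.
Qed.

Theorem not_extension_decomposition_D1_D2 : ~ extension_decomposition D1 D2.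
Proof.
  intros [f [A [B [K [Hf [HA [HB [HK [Hfb Hdec]]]]]]]]].
  destruct (half_pow_small (/ (4 * (K * K + 1)))) as [n Hn];
    [apply Rinv_0_lt_compat; nra|].
  set (s := (/ 2) ^ S n).
  assert (Hs : 2 * (s * s) * (K * K) <= / 2).
  { assert (Hs1 : s * (4 * (K * K + 1)) < 1).
    { specialize (Hn (S n) ltac:(lia)); fold s in Hn.
      apply (Rmult_lt_compat_r (4 * (K * K + 1))) in Hn; [|nra].
      rewrite Rinv_l in Hn by nra; exact Hn. }
    assert (0 < s) by apply half_pow_pos.
    assert (s <= 1) by (apply (half_pow_le 0 (S n)); lia).
    nra. }
  set (h := (/ 2) ^ n).
  destruct (half_pow_small (h / (2 * A * B + 1))) as [k Hk];
    [apply Rdiv_lt_0_compat; [apply half_pow_pos|nra]|].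
  set (t := (/ 2) ^ S k).
  assert (Ht : (2 * A * B + 1) * t < h).
  { specialize (Hk (S k) ltac:(lia)); fold t in Hk.
    apply (Rmult_lt_compat_l (2 * A * B + 1)) in Hk; [|nra].
    replace ((2 * A * B + 1) * (h / (2 * A * B + 1))) with h in Hk by (field; nra); exact Hk. }
  destruct (exists_window_vector f n k Hf) as [x [Hxout [[p0 Hp0] Hfx]]].
  destruct (Hdec x) as [a [w [Hx [Ha Hw]]]].
  assert (Hlow : h * t * l2norm x <= l2norm (D1 x)).
  { replace (h * t) with ((/ 2) ^ S (n + k))
      by (unfold h, t; rewrite <- pow_add; f_equal; lia).
    unfold D1; apply l2norm_diag_ge; [apply half_pow_pos|]; intros p.
    destruct (Nat.lt_ge_cases p n), (Nat.lt_ge_cases (n + k) p);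
      [left; apply Hxout; lia..|right; apply half_pow_le; lia]. }
  assert (Hcomp : l2norm (D2 (f x)) <= t * t * l2norm (f x)).
  { replace (t * t) with ((/ 2) ^ (2 * S k))
      by (unfold t; rewrite <- pow_add; f_equal; lia).
    unfold D2; apply l2norm_diag_le; [left; apply half_pow_pos|]; intros p.
    destruct (Nat.lt_ge_cases p k); [left; apply Hfx; assumption|right; apply half_pow_le; lia]. }
  assert (Htail : l2norm (D1 x) * l2norm (D1 x) <=
                  2 * (l2norm a * l2norm a) + 2 * (s * s) * (l2norm w * l2norm w)).
  { apply (l2norm_sq_diag_tail _ _ _ _ _ _ (proj1 (half_pow_bounds (S n))) Hx); intros p.
    destruct (Nat.lt_ge_cases p n).
    - left; unfold D1; rewrite diag_coord, Hxout by lia; apply C_ext; simpl; ring.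
    - right; apply half_pow_le; lia. }
  assert (Hpos : 0 < l2norm (D1 x)).
  { pose proof (l2norm_pos x p0 Hp0).
    assert (0 < h) by apply half_pow_pos.
    assert (0 < t) by apply half_pow_pos.
    apply Rlt_le_trans with (h * t * l2norm x); [|exact Hlow].
    apply Rmult_lt_0_compat; [apply Rmult_lt_0_compat|]; assumption. }
  assert (Hh : h <= 2 * A * B * t).
  { apply (decomposition_estimate (l2norm (D1 x)) (l2norm a) (l2norm w) (l2norm (f x))
             (l2norm x) A B K s h t); try apply l2norm_ge0; try assumption.
    - apply half_pow_pos.
    - eapply Rle_trans; [exact Ha|]; apply Rmult_le_compat_l; assumption.
    - apply Hfb. }
  assert (0 < t) by apply half_pow_pos.
  nra.
Qed.

Theorem mainTheorem5 : same_ideal D1 D2 /\ ~ equiv_after_ext D1 D2.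
Proof.
  split; [exact same_ideal_D1_D2|].
  intros Hequiv; apply not_extension_decomposition_D1_D2.
  apply extension_decomposition_of_equiv; [l2_ring|exact Hequiv].
Qed.
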